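(* Let $V$ be a finite-dimensional vector space over $\mathbb{F}_q$ and $s_1,s_2,s_3$ transvections in $\mathrm{SL}(V)$. Then \[w(s_1,s_2,s_3)-w(s_1,s_3,s_2)=w(s_1,s_3)-w(s_1,s_2)w(s_2,s_3)-w(s_1^{s_2},s_3).\]
   Context: Transvections $s_i=1+u_i\otimes\phi_i$, i.e. $x\mapsto x+\phi_i(x)u_i$ with $\phi_i(u_i)=0$. For transvections $r_1,\dots,r_k$ ($k\ge2$), $w(r_1,\dots,r_k)=\prod_{i=1}^k\phi_{r_{i+1}}(u_{r_i})$ (indices mod $k$), which is independent of the chosen representations. $s^g=g^{-1}sg$. *)

From HB Require Import structures.
From mathcomp Require Import all_boot all_order all_algebra all_field.
Set Implicit Arguments. Unset Strict Implicit. Unset Printing Implicit Defensive.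
Import GRing.Theory.
Local Open Scope ring_scope.

(* V = 'cV[F]_n (column vectors), linear maps = square matrices acting on the
   left (x |-> A *m x), so matrix product is composition of maps.
   Linear functionals are row vectors phi, with phi(x) = (phi *m x) 0 0. *)

Definition ev (F : fieldType) (n : nat) (phi : 'rV[F]_n) (x : 'cV[F]_n) : F :=
  (phi *m x) 0 0.

Definition tv_rep (F : fieldType) (n : nat) (s : 'M[F]_n)
  (u : 'cV[F]_n) (phi : 'rV[F]_n) : Prop :=
  ev phi u = 0 /\ s = 1%:M + u *m phi.

Definition transvection (F : fieldType) (n : nat) (s : 'M[F]_n) : Prop :=
  s <> 1%:M /\ exists u phi, tv_rep s u phi.

Definition conjm (F : fieldType) (n : nat) (s g : 'M[F]_n) : 'M[F]_n :=
  invmx g *m s *m g.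

Definition w2 (F : fieldType) (n : nat) (u1 : 'cV[F]_n) (phi1 : 'rV[F]_n)
  (u2 : 'cV[F]_n) (phi2 : 'rV[F]_n) : F :=
  ev phi2 u1 * ev phi1 u2.

Definition w3 (F : fieldType) (n : nat) (u1 : 'cV[F]_n) (phi1 : 'rV[F]_n)
  (u2 : 'cV[F]_n) (phi2 : 'rV[F]_n) (u3 : 'cV[F]_n) (phi3 : 'rV[F]_n) : F :=
  ev phi2 u1 * ev phi3 u2 * ev phi1 u3.

From HB Require Import structures.
From mathcomp Require Import all_boot all_order all_algebra all_field.
From mathcomp Require Import ring.
Set Implicit Arguments. Unset Strict Implicit. Unset Printing Implicit Defensive.
Import GRing.Theory.
Local Open Scope ring_scope.

(* The conjugate s1^{s2} = s2^-1 s1 s2 is the transvection with representation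
   (s2^-1 u1, phi1 s2), and s2^-1 = 1 - u2 (x) phi2.  Since w(s1^{s2}, s3) does not
   depend on the representation, it expands into
   (phi3(u1) - phi2(u1) phi3(u2)) (phi1(u3) + phi1(u2) phi2(u3)),
   and the claimed identity becomes a polynomial identity in the pairings. *)

Section Transvections.

Variables (F : fieldType) (n : nat).
Implicit Types (s g : 'M[F]_n) (u v x : 'cV[F]_n) (phi psi : 'rV[F]_n).

Lemma ev_mulmxA phi (A : 'M[F]_n) x : ev phi (A *m x) = ev (phi *m A) x.
Proof. by rewrite /ev mulmxA. Qed.

Lemma evNr phi u : ev phi (- u) = - ev phi u.
Proof. by rewrite /ev mulmxN mxE. Qed.

Lemma ev_rank1 phi psi u x : ev (phi *m (u *m psi)) x = ev phi u * ev psi x.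
Proof. by rewrite /ev !mulmxA -(mulmxA (phi *m u)) mxE big_ord1. Qed.

Lemma ev_mul_tv phi psi u x :
  ev (phi *m (1%:M + u *m psi)) x = ev phi x + ev phi u * ev psi x.
Proof. by rewrite mulmxDr mulmx1 -ev_rank1 /ev mulmxDl mxE. Qed.

Lemma tv_rep_mulmx_inv s u phi : tv_rep s u phi -> s *m (1%:M - u *m phi) = 1%:M.
Proof.
move=> [phi_u0 ->]; have nil_uphi : u *m phi *m (u *m phi) = 0.
  by rewrite mulmxA -(mulmxA u) (mx11_scalar (phi *m u)) -/(ev phi u) phi_u0
             mul_mx_scalar scale0r mul0mx.
by rewrite mulmxBr mulmx1 mulmxDl mul1mx nil_uphi addr0 addrK.
Qed.

Lemma tv_rep_unitmx s u phi : tv_rep s u phi -> s \in unitmx.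
Proof. by move/tv_rep_mulmx_inv/mulmx1_unit => []. Qed.

Lemma tv_rep_inv s u phi : tv_rep s u phi -> tv_rep (invmx s) (- u) phi.
Proof.
move=> rep; have s_unit := tv_rep_unitmx rep.
have [phi_u0 _] := rep; split; first by rewrite evNr phi_u0 oppr0.
move/(congr1 (mulmx (invmx s))): (tv_rep_mulmx_inv rep).
by rewrite mulKmx // mulmx1 mulNmx => <-.
Qed.

Lemma tv_rep_conjm s g u phi : g \in unitmx ->
  tv_rep s u phi -> tv_rep (conjm s g) (invmx g *m u) (phi *m g).
Proof.
move=> g_unit [phi_u0 ->]; split.
  by rewrite ev_mulmxA -(mulmxA phi) mulmxV // mulmx1.
by rewrite /conjm mulmxDr mulmx1 mulmxDl mulVmx // !mulmxA.
Qed.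

Lemma tv_rep_rank1 s u u' phi phi' :
  tv_rep s u phi -> tv_rep s u' phi' -> u *m phi = u' *m phi'.
Proof. by move=> [_ ->] [_] /addrI. Qed.

Lemma w2_rank1 u phi v psi : w2 u phi v psi = ev (psi *m (u *m phi)) v.
Proof. by rewrite ev_rank1. Qed.

Lemma w2_indep_repl s u u' phi phi' v psi :
  tv_rep s u phi -> tv_rep s u' phi' -> w2 u phi v psi = w2 u' phi' v psi.
Proof. by move=> rep rep'; rewrite !w2_rank1 (tv_rep_rank1 rep rep'). Qed.

End Transvections.

Theorem lemma4p11 (F : finFieldType) (n : nat) (s1 s2 s3 : 'M[F]_n)
  (u1 u2 u3 u12 : 'cV[F]_n) (phi1 phi2 phi3 phi12 : 'rV[F]_n) :
  transvection s1 -> transvection s2 -> transvection s3 ->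
  tv_rep s1 u1 phi1 -> tv_rep s2 u2 phi2 -> tv_rep s3 u3 phi3 ->
  tv_rep (conjm s1 s2) u12 phi12 ->
  w3 u1 phi1 u2 phi2 u3 phi3 - w3 u1 phi1 u3 phi3 u2 phi2 =
  w2 u1 phi1 u3 phi3 - w2 u1 phi1 u2 phi2 * w2 u2 phi2 u3 phi3
  - w2 u12 phi12 u3 phi3.
Proof.
move=> _ _ _ rep1 rep2 _ rep12.
have rep_conj := tv_rep_conjm (tv_rep_unitmx rep2) rep1.
rewrite (w2_indep_repl _ _ rep12 rep_conj) /w2 /w3 ev_mulmxA.
have [_ ->] := tv_rep_inv rep2; have [_ ->] := rep2.
by rewrite !ev_mul_tv evNr; ring.
Qed.
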